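(* Let $\mathcal{B}=(v_1,\dots,v_N)$ be a template database with $v_1,\dots,v_N$ independent and uniform in $\mathbb{Z}_2^n$, and let $\varepsilon\ge 0$. The probability that there exists an $(N,\varepsilon)$-master template, i.e. a $t\in\mathbb{Z}_2^n$ with $d_{\mathcal H}(v_i,t)\le\varepsilon$ for all $i$, is $$\mathbb{P}(\mathcal{B}\subset B_\varepsilon)=\frac{1}{2^{n(N-1)}}\sum_{B\in\mathcal{C}(\varepsilon,N)}\left|B^\cap_\varepsilon(B)\right|^{-1},$$ where for $B=(w_1,\dots,w_N)$, $B_\varepsilon^\cap(B)=\bigcap_{i=1}^N B_\varepsilon(w_i)$. Moreover $$V_\varepsilon^{N-1}\le\mathbb{P}(\mathcal{B}\subset B_\varepsilon)\le V_{2\varepsilon}^{N-1}.$$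
   Context: $d_{\mathcal H}$ is the Hamming distance on $\mathbb{Z}_2^n$ and $B_\varepsilon(t)=\{y:d_{\mathcal H}(t,y)\le\varepsilon\}$. $\mathcal{C}(\varepsilon,N)=\{B=(w_1,\dots,w_N)\in(\mathbb{Z}_2^n)^N : \{w_1,\dots,w_N\}\subset B_\varepsilon\}$ where $B_\varepsilon$ is a fixed Hamming ball of radius $\varepsilon$ (for instance centered at $0$). $V_r=\frac{1}{2^n}\sum_{k=0}^{r}\binom nk$ is the measure of a ball of radius $r$. The event ''$\mathcal{B}\subset B_\varepsilon$'' means that all templates of $\mathcal B$ lie in some common ball of radius $\varepsilon$. *)

From mathcomp Require Import all_boot all_order all_algebra.
Set Implicit Arguments. Unset Strict Implicit. Unset Printing Implicit Defensive.
Import Order.TTheory GRing.Theory Num.Theory.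

Definition word (n : nat) := {ffun 'I_n -> bool}.

Definition word0 (n : nat) : word n := [ffun=> false].

Definition hamming n (x y : word n) : nat := #|[set i | x i != y i]|.

Definition hball n (e : nat) (t : word n) : {set word n} :=
  [set y | hamming t y <= e].

Definition database (n N : nat) := {ffun 'I_N -> word n}.

Definition has_master n N (e : nat) (B : database n N) : bool :=
  [exists t : word n, [forall i, hamming (B i) t <= e]].

(* P(B ⊂ B_eps) for B uniform on (Z_2^n)^N (independent uniform templates) *)
Definition prob_master (R : realFieldType) (n N e : nat) : R :=
  (#|[set B : database n N | has_master e B]|)%:R / (2 ^ (n * N))%:R.

Definition Cset (n N e : nat) : {set database n N} :=
  [set B : database n N | [forall i, B i \in hball e (word0 n)]].

Definition capball n N (e : nat) (B : database n N) : {set word n} :=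
  \bigcap_(i < N) hball e (B i).

Definition Vol (R : realFieldType) (n r : nat) : R :=
  (\sum_(k < r.+1) 'C(n, k))%:R / (2 ^ n)%:R.

From mathcomp Require Import all_boot all_order all_algebra.
From mathcomp Require Import ring.
Import Order.TTheory GRing.Theory Num.Theory.
Set Implicit Arguments. Unset Strict Implicit. Unset Printing Implicit Defensive.

(* Weight each pair (B, t) with t a master template of B by 1/|B^cap_eps(B)|:
   summing over t first counts every database with a master template once,
   while translating by t maps the databases having t as a master template
   bijectively onto C(eps, N), preserving |B^cap_eps(B)|.  For the bounds, the
   event "every template lies within r of the first one" has probability
   V_r^(N-1); for r = eps it forces a master template (the first template) and
   for r = 2 eps it is forced by one (triangle inequality). *)

Lemma card_word n : #|{: word n}| = 2 ^ n.
Proof. by rewrite card_ffun card_bool card_ord. Qed.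

Definition addw n (t y : word n) : word n := [ffun i => t i (+) y i].

Lemma addwK n (t : word n) : involutive (addw t).
Proof. by move=> y; apply/ffunP=> i; rewrite !ffunE addKb. Qed.

Lemma addw_inj n (t : word n) : injective (addw t).
Proof. exact: inv_inj (addwK t). Qed.

Lemma addw0 n (t : word n) : addw t (word0 n) = t.
Proof. by apply/ffunP=> i; rewrite !ffunE addbF. Qed.

Lemma addww n (t : word n) : addw t t = word0 n.
Proof. by apply/ffunP=> i; rewrite !ffunE addbb. Qed.

Lemma hammingC n (x y : word n) : hamming x y = hamming y x.
Proof. by apply: eq_card => i; rewrite !inE eq_sym. Qed.

Lemma hball_center n r (t : word n) : t \in hball r t.
Proof. by rewrite inE /hamming (eq_card0 (_ : _ =i pred0)) // => i; rewrite inE eqxx. Qed.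

Lemma hamming_addw n (t x y : word n) : hamming (addw t x) (addw t y) = hamming x y.
Proof. by apply: eq_card => i; rewrite !inE !ffunE; case: (t i); case: (x i); case: (y i). Qed.

Lemma hamming_triangle n (x y z : word n) : hamming x z <= hamming x y + hamming y z.
Proof.
apply: leq_trans (leq_card_setU _ _); apply/subset_leq_card/subsetP => i.
by rewrite !inE; case: (x i); case: (y i); case: (z i).
Qed.

Lemma hamming0w n (y : word n) : hamming (word0 n) y = #|[set i | y i]|.
Proof. by apply: eq_card => i; rewrite !inE ffunE; case: (y i). Qed.

Lemma card_subsets_le (T : finType) r :
  #|[set A : {set T} | #|A| <= r]| = \sum_(k < r.+1) 'C(#|T|, k).
Proof.
elim: r => [|r IHr]; rewrite big_ord_recr /= -card_draws.
  by rewrite big_ord0; apply: eq_card => A; rewrite !inE leqn0.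
rewrite -IHr -(cardsID [set A : {set T} | #|A| <= r] [set A : {set T} | #|A| <= r.+1]).
congr addn.
  by apply: eq_card => A; rewrite !inE andb_idl // => /leqW.
by apply: eq_card => A; rewrite !inE -ltnNge eqn_leq andbC.
Qed.

Lemma card_hball n r (t : word n) : #|hball r t| = \sum_(k < r.+1) 'C(n, k).
Proof.
have -> : hball r t = addw t @^-1: hball r (word0 n).
  by apply/setP => y; rewrite !inE -(hamming_addw t) addww.
rewrite card_preimset; last exact: addw_inj.
pose supp (y : word n) := [set i | y i].
pose char (A : {set 'I_n}) : word n := [ffun i => i \in A].
have charK : cancel char supp by move=> A; apply/setP => i; rewrite !inE ffunE.
have suppK : cancel supp char by move=> y; apply/ffunP => i; rewrite ffunE inE.
rewrite -[in RHS](card_ord n) -card_subsets_le -(card_imset _ (can_inj charK)).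
apply: eq_card => y.
by rewrite !inE hamming0w -{2}(suppK y) (mem_imset _ _ (can_inj charK)) inE.
Qed.

Lemma mem_capball n N e (B : database n N) y :
  (y \in capball e B) = [forall i, hamming (B i) y <= e].
Proof.
apply/bigcapP/forallP => [inB i | near_y i _]; last by rewrite inE.
by have := inB i isT; rewrite inE.
Qed.

Lemma has_master_capball n N e (B : database n N) :
  has_master e B = (capball e B != set0).
Proof.
by apply/existsP/set0Pn => -[t master_t]; exists t; rewrite ?mem_capball in master_t *.
Qed.

Definition shift n N (t : word n) (B : database n N) : database n N :=
  [ffun i => addw t (B i)].

Lemma shift_inj n N (t : word n) : injective (@shift n N t).
Proof. by apply: (inv_inj (_ : involutive _)) => B; apply/ffunP => i; rewrite !ffunE addwK. Qed.

Lemma card_capball_shift n N e (t : word n) (B : database n N) :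
  #|capball e (shift t B)| = #|capball e B|.
Proof.
rewrite -(card_preimset _ (@addw_inj n t)); apply: eq_card => y.
by rewrite inE !mem_capball; apply: eq_forallb => i; rewrite ffunE hamming_addw.
Qed.

Lemma mem_capball_shift n N e (t : word n) (B : database n N) :
  (t \in capball e (shift t B)) = (B \in Cset n N e).
Proof.
rewrite mem_capball inE; apply: eq_forallb => i.
by rewrite ffunE inE -{2}(addw0 t) hamming_addw hammingC.
Qed.

Local Open Scope ring_scope.

Lemma natr_exp2_neq0 (R : numFieldType) k : (2 ^ k)%:R != 0 :> R.
Proof. by rewrite pnatr_eq0 expn_eq0. Qed.

Lemma sumr_inv_card (R : numFieldType) (T : finType) (A : {set T}) :
  \sum_(x in A) (#|A|%:R : R)^-1 = (A != set0)%:R.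
Proof.
rewrite sumr_const -cards_eq0; have [->|nzA] := eqVneq #|A| 0%N; first by rewrite mulr0n.
by rewrite -[_ *+ #|A|]mulr_natr mulVf // pnatr_eq0.
Qed.

Lemma card_has_master (R : numFieldType) n N e :
  #|[set B : database n N | has_master e B]|%:R =
  (2 ^ n)%:R * \sum_(B in Cset n N e) (#|capball e B|%:R : R)^-1.
Proof.
have -> : #|[set B : database n N | has_master e B]|%:R =
    \sum_(B : database n N) \sum_(t in capball e B) (#|capball e B|%:R : R)^-1.
  rewrite -sum1_card natr_sum big_mkcond /=; apply: eq_bigr => B _.
  by rewrite sumr_inv_card inE has_master_capball; case: (_ != _).
rewrite (exchange_big_dep predT) //= -card_word mulr_natl -sumr_const; apply: eq_bigr => t _.
rewrite (reindex_inj (@shift_inj n N t)) /=.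
by apply: eq_big => [B | B _]; rewrite ?mem_capball_shift ?card_capball_shift.
Qed.

Definition near_head n N r : {set database n N.+1} :=
  [set B : database n N.+1 | [forall i, B i \in hball r (B ord0)]].

Lemma card_near_head n N r :
  #|near_head n N r| = (2 ^ n * (\sum_(k < r.+1) 'C(n, k)) ^ N)%N.
Proof.
rewrite -sum1_card (partition_big (fun B : database n N.+1 => B ord0) predT) //=.
rewrite -card_word -sum_nat_const; apply: eq_bigr => t _.
pose F (i : 'I_N.+1) := if i == ord0 then pred1 t else mem (hball r t).
rewrite sum1dep_card (eq_card (B := family F)) => [|B].
  rewrite card_family foldrE big_map big_enum /= big_ord_recl /F eqxx /= card1 mul1n.
  by rewrite (eq_bigr (fun=> #|hball r t|)) // prod_nat_const card_ord card_hball.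
rewrite !inE; apply/andP/familyP => [[/forallP near_B /eqP B0] i | inF].
  by rewrite /F -B0; case: eqP => [->|_]; [rewrite inE | apply: near_B].
have B0 : B ord0 = t by have := inF ord0; rewrite /F eqxx inE => /eqP.
split; last by rewrite B0.
apply/forallP => i; have := inF i; rewrite /F B0.
by case: eqP => [->|_] //; rewrite inE => /eqP ->; apply: hball_center.
Qed.

Lemma near_head_has_master n N e :
  near_head n N e \subset [set B | has_master e B].
Proof.
apply/subsetP => B; rewrite !inE => /forallP near_B.
apply/existsP; exists (B ord0); apply/forallP => i.
by have := near_B i; rewrite inE hammingC.
Qed.

Lemma has_master_near_head n N e :
  [set B | has_master e B] \subset near_head n N (2 * e).
Proof.
apply/subsetP => B; rewrite !inE => /existsP[t /forallP master_t].
apply/forallP => i; rewrite inE (leq_trans (hamming_triangle _ t _)) //.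
by rewrite mul2n -addnn leq_add // hammingC.
Qed.

Lemma Vol_expr_near_head (R : realFieldType) n N r :
  Vol R n r ^+ N = #|near_head n N r|%:R / (2 ^ (n * N.+1))%:R.
Proof.
rewrite card_near_head /Vol mulnS expnD !natrM expr_div_n -!natrX -expnM.
by field; rewrite !natr_exp2_neq0.
Qed.

Theorem theorem9p2 (R : realFieldType) (n N e : nat) (hN : (0 < N)%N) :
  prob_master R n N e =
    ((2 ^ (n * (N - 1)))%:R)^-1 *
      \sum_(B in Cset n N e) ((#|capball e B|)%:R)^-1
  /\ Vol R n e ^+ (N - 1) <= prob_master R n N e
  /\ prob_master R n N e <= Vol R n (2 * e) ^+ (N - 1).
Proof.
case: N hN => // N _; rewrite subn1 /=.
have inv_two_pos : 0 < ((2 ^ (n * N.+1))%:R : R)^-1 by rewrite invr_gt0 ltr0n expn_gt0.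
split; [|split]; rewrite /prob_master.
- rewrite card_has_master mulnS expnD natrM.
  by field; rewrite !natr_exp2_neq0.
- by rewrite Vol_expr_near_head ler_pM2r // ler_nat subset_leq_card ?near_head_has_master.
- by rewrite Vol_expr_near_head ler_pM2r // ler_nat subset_leq_card ?has_master_near_head.
Qed.
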